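(* Let $\mathcal A\subset\mathbb R^n$ be compact with diameter $D_{\mathcal A}<\infty$, let $\mathcal X=\mathrm{conv}(\mathcal A)$ or $\mathcal X=\mathrm{lin}(\mathcal A)$, and let $f$ be convex and differentiable with $L$-Lipschitz gradient. Let $\{x_t\}_{t\ge0}$ be generated by the AC-FW algorithm described in the context, let $\eta\in(1,2)$, and assume Conditions (D) and (S) hold, with $R\ge1$ the constant of part (iii) of Condition (S). Let $\{h_t\}_{t\ge0}$ denote the elements of $\mathcal G\cap\mathcal I_\eta$ in increasing order. Then for any $t\ge0$, $$f(x_{h_t})-f(x^\star)\le\frac{\max\left\{\left(\frac{2R}{2-\eta}-1\right)(f(x_0)-f(x^\star)),\ \frac{2LR^2D_{\mathcal A}^2}{2-\eta}\right\}}{t+\frac{2R}{2-\eta}-1}.$$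
   Context: $D_{\mathcal A}:=\sup_{x,y\in\mathcal A}\|x-y\|_2$; $\|\nabla f(x)-\nabla f(y)\|_2\le L\|x-y\|_2$. $x^\star$ is an optimal solution of $\min_{x\in\mathcal X}f(x)$. For $x\ne y$, $\ell(x,y):=2|f(y)-f(x)-\nabla f(x)^\top(y-x)|/\|y-x\|_2^2$, $\ell(x,x):=0$. AC-FW algorithm: given a damping sequence $\{r_t\}_{t\ge0}$ and a direction-finding subroutine, pick $x_{-1}\in\mathcal A$, $x_0\in\arg\min_{v\in\mathcal A}\nabla f(x_{-1})^\top v$, $L_0:=\ell(x_{-1},x_0)$. For $t=0,1,\dots$: $v_t\in\arg\min_{v\in\mathcal A}\nabla f(x_t)^\top v$; the subroutine returns $d_t\in\mathbb R^n$ and $\gamma_t^{\max}\in(0,\infty]$; $\gamma_t:=\min\{\nabla f(x_t)^\top d_t/(L_t\|d_t\|_2^2),\gamma_t^{\max}\}$; $\bar x_{t+1}:=x_t-\gamma_td_t$; $L_{t+1}:=\max\{\ell(x_t,\bar x_{t+1}),r_tL_t\}$; $x_{t+1}:=\bar x_{t+1}$ if $f(\bar x_{t+1})<f(x_t)$, else $x_{t+1}:=x_t$. $\mathcal I_\eta:=\{t\ge0:L_{t+1}\le\eta L_t\}$; $\mathcal G:=\{t\ge0:\gamma_t^{\max}\ge1\text{ or }\gamma_t<\gamma_t^{\max}\}$. Condition (D): $r_t\in(0,1]$ for all $t$ and $\prod_{t\ge0}r_t\in(0,1]$. Condition (S): for all $t\ge0$: (i) $\|d_t\|_2\le D_{\mathcal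 A}$ and $x_t-\gamma d_t\in\mathcal X$ for all finite $\gamma\in[0,\gamma_t^{\max}]$; (ii) $\mathcal G$ is infinite; (iii) since $f$ is convex, there is a constant $R\ge1$ independent of $t$ with $\nabla f(x_t)^\top d_t\ge(f(x_t)-f(x^\star))/R$. *)

From HB Require Import structures.
From mathcomp Require Import all_boot all_order all_algebra.
From mathcomp Require Import all_classical all_reals all_analysis.
Set Implicit Arguments. Unset Strict Implicit. Unset Printing Implicit Defensive.
Import Order.TTheory GRing.Theory Num.Theory.
Import numFieldNormedType.Exports.
Local Open Scope classical_set_scope.
Local Open Scope ring_scope.

Section Defs.
Variables (R : realType) (n : nat).
Notation V := 'rV[R]_n.

Definition dotv (u v : V) : R := \sum_(i < n) u ord0 i * v ord0 i.
Definition enorm (u : V) : R := Num.sqrt (dotv u u).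

Definition diam (A : set V) : R := sup [set enorm (p.1 - p.2) | p in A `*` A].

Definition convhull (A : set V) : set V :=
  [set x | exists (k : nat) (w : 'I_k -> R) (a : 'I_k -> V),
     (forall i, 0 <= w i) /\ \sum_(i < k) w i = 1 /\ (forall i, A (a i)) /\
     x = \sum_(i < k) w i *: a i].

Definition linspan (A : set V) : set V :=
  [set x | exists (k : nat) (w : 'I_k -> R) (a : 'I_k -> V),
     (forall i, A (a i)) /\ x = \sum_(i < k) w i *: a i].

Definition convex_fun (f : V -> R) : Prop :=
  forall (x y : V) (s : R), 0 <= s <= 1 ->
    f (s *: x + (1 - s) *: y) <= s * f x + (1 - s) * f y.

Definition is_gradient (f : V -> R) (grad : V -> V) : Prop :=
  forall x : V, differentiable f x /\ forall v : V, 'd f x v = dotv (grad x) v.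

Definition ell (f : V -> R) (grad : V -> V) (x y : V) : R :=
  if x == y then 0
  else 2 * `|f y - f x - dotv (grad x) (y - x)| / (enorm (y - x)) ^+ 2.

End Defs.

(* Along the run the curvature estimates Lc t stay in (0, L] and every iterate is
   feasible, so the gaps f (x t) - f x* are nonnegative and nonincreasing.  At an
   index s of G cap I_eta the trial point obeys the quadratic upper model with
   constant eta * Lc s.  An unclipped step then decreases f by at least
   (1 - eta/2) <grad f, d>^2 / (Lc s |d|^2), whence gap_s^2 <= P (gap_s - gap_{s+1})
   with P = 2 L R^2 D^2 / (2 - eta); a clipped step has gamma >= 1 and decreases f
   by at least (1 - eta/2) <grad f, d> >= gap_s / B with B = 2 R / (2 - eta).
   Either decrease propagates the invariant gap * (k + B - 1) <= max ((B - 1) gap_0, P)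
   along the enumeration h. *)

From HB Require Import structures.
From mathcomp Require Import all_boot all_order all_algebra.
From mathcomp Require Import all_classical all_reals all_analysis.
From mathcomp Require Import lra ring.
Set Implicit Arguments. Unset Strict Implicit. Unset Printing Implicit Defensive.
Import Order.TTheory GRing.Theory Num.Theory.
Import numFieldNormedType.Exports.
Local Open Scope classical_set_scope.
Local Open Scope ring_scope.

Section InnerProduct.
Variables (R : realType) (n : nat).
Implicit Types u w z : 'rV[R]_n.

Lemma dotvC u w : dotv u w = dotv w u.
Proof. by apply: eq_bigr => i _; rewrite mulrC. Qed.

Lemma dotvDl u w z : dotv (u + w) z = dotv u z + dotv w z.
Proof. by rewrite /dotv -big_split; apply: eq_bigr => i _; rewrite !mxE mulrDl. Qed.

Lemma dotvZl (s : R) u w : dotv (s *: u) w = s * dotv u w.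
Proof. by rewrite /dotv mulr_sumr; apply: eq_bigr => i _; rewrite !mxE mulrA. Qed.

Lemma dotvNl u w : dotv (- u) w = - dotv u w.
Proof. by rewrite -scaleN1r dotvZl mulN1r. Qed.

Lemma dotvBl u w z : dotv (u - w) z = dotv u z - dotv w z.
Proof. by rewrite dotvDl dotvNl. Qed.

Lemma dotvDr u w z : dotv z (u + w) = dotv z u + dotv z w.
Proof. by rewrite dotvC dotvDl !(dotvC z). Qed.

Lemma dotvZr (s : R) u w : dotv w (s *: u) = s * dotv w u.
Proof. by rewrite dotvC dotvZl dotvC. Qed.

Lemma dotv0r u : dotv u 0 = 0.
Proof. by rewrite /dotv big1 // => i _; rewrite mxE mulr0. Qed.

Lemma dotvv_ge0 u : 0 <= dotv u u.
Proof. by apply: sumr_ge0 => i _; rewrite -expr2 sqr_ge0. Qed.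

Lemma dotvv_gt0 u : u != 0 -> 0 < dotv u u.
Proof.
move=> u0; rewrite lt_def dotvv_ge0 andbT; apply: contra u0 => /eqP uu0.
apply/eqP/rowP => i; rewrite mxE.
have /psumr_eq0P sq0 := uu0.
have /eqP := sq0 (fun k _ => sqr_ge0 (u ord0 k)) i isT.
by rewrite mulf_eq0 orbb => /eqP.
Qed.

Lemma enorm_ge0 u : 0 <= enorm u.
Proof. exact: sqrtr_ge0. Qed.

Lemma enorm_sqr u : enorm u ^+ 2 = dotv u u.
Proof. by rewrite sqr_sqrtr // dotvv_ge0. Qed.

Lemma enormZ (s : R) u : enorm (s *: u) = `|s| * enorm u.
Proof. by rewrite /enorm dotvZl dotvZr mulrA -expr2 sqrtrM ?sqr_ge0 // sqrtr_sqr. Qed.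

Lemma discriminant_le (a b c : R) : 0 <= c ->
  (forall s, 0 <= a + 2 * b * s + c * s ^+ 2) -> b ^+ 2 <= a * c.
Proof.
move=> c0 nonneg; have [{}c0|] := ltP 0 c.
  have := nonneg (- b / c).
  have -> : a + 2 * b * (- b / c) + c * (- b / c) ^+ 2 = a - b ^+ 2 / c.
    by field; rewrite gt_eqF.
  by rewrite subr_ge0 ler_pdivrMr // mulrC.
move=> c_le0; have c_eq0 : c = 0 by apply/le_anti; rewrite c_le0 c0.
subst c; rewrite mulr0.
have [-> | b0] := eqVneq b 0; first by rewrite expr0n.
have := nonneg (- (a + 1) / (2 * b)).
have -> : a + 2 * b * (- (a + 1) / (2 * b)) + 0 * (- (a + 1) / (2 * b)) ^+ 2 = -1.
  by field.
by rewrite ler0N1.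
Qed.

Lemma cauchy_schwarz u w : dotv u w <= enorm u * enorm w.
Proof.
have sq : dotv u w ^+ 2 <= dotv u u * dotv w w.
  apply: discriminant_le => [|s]; first exact: dotvv_ge0.
  have := dotvv_ge0 (u + s *: w).
  by rewrite !dotvDl !dotvDr !dotvZl !dotvZr (dotvC w u) => /le_trans; apply; lra.
apply: le_trans (ler_norm _) _.
rewrite -(@ler_pXn2r _ 2) ?nnegrE ?normr_ge0 ?mulr_ge0 ?enorm_ge0 //.
by rewrite exprMn !enorm_sqr real_normK ?num_real.
Qed.

End InnerProduct.

Section Hulls.
Variables (R : realType) (n : nat) (A : set 'rV[R]_n).

Lemma subset_convhull : A `<=` convhull A.
Proof.
move=> y Ay; exists 1%N, (fun=> 1), (fun=> y).
by rewrite !big_ord1 scale1r; split=> //; exact: ler01.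
Qed.

Lemma subset_linspan : A `<=` linspan A.
Proof. by move=> y Ay; exists 1%N, (fun=> 1), (fun=> y); rewrite big_ord1 scale1r. Qed.

End Hulls.

Section Smoothness.
Variables (R : realType) (n : nat) (f : 'rV[R]_n -> R) (grad : 'rV[R]_n -> 'rV[R]_n).
Hypothesis grad_f : is_gradient f grad.

Lemma is_derive_line (x u : 'rV[R]_n) (s : R) :
  is_derive s 1 (fun t : R => f (t *: u + x)) (dotv (grad (s *: u + x)) u).
Proof.
set p := s *: u + x.
have quotient_eq : (fun h : R => h^-1 *: (((fun t : R => f (t *: u + x)) \o shift s)
    (h *: 1) - f (s *: u + x))) = (fun h : R => h^-1 *: ((f \o shift p) (h *: u) - f p)).
  apply/funext => h /=; rewrite /p; congr (_ *: (f _ - _)).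
  by rewrite scalerDl [_ *: (1:R)]mulr1 addrA.
have [df dfE] := grad_f p.
apply: DeriveDef; first by rewrite /derivable quotient_eq; exact: diff_derivable.
by rewrite /derive quotient_eq -/(derive f p u) deriveE.
Qed.

Variable L : R.
Hypothesis grad_lipschitz : forall y z, enorm (grad y - grad z) <= L * enorm (y - z).

Lemma descent_lemma (x y : 'rV[R]_n) :
  f y - f x - dotv (grad x) (y - x) <= L / 2 * dotv (y - x) (y - x).
Proof.
set u := y - x; set c := dotv (grad x) u; set q := L / 2 * dotv u u.
pose phi t := f (t *: u + x) - c * t - q * t ^+ 2.
have dphi (s : R) : is_derive s 1 phi (dotv (grad (s *: u + x)) u - c - q * (2 * s)).
  (* [dline] is picked up by the instance search of [exact: _] below *)
  have dline := is_derive_line x u s.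
  have : is_derive s 1 ((fun t : R => f (t *: u + x)) - c \*: id - q \*: (@id R ^+ 2))
      (dotv (grad (s *: u + x)) u - c *: (1:R) - q *: ((2%:R * id s ^+ 1) *: (1:R))).
    exact: _.
  have -> : (fun t : R => f (t *: u + x)) - c \*: id - q \*: (@id R ^+ 2) = phi.
    by apply/funext => t /=; rewrite /phi /= expr2.
  by move=> /is_derive_eq; apply; rewrite /GRing.scale /= !mulr1 expr1.
have dphi_le0 (s : R) : s \in `]0, 1[ -> derive1 phi s <= 0.
  rewrite in_itv /= => /andP [s0 _]; rewrite derive1E derive_val.
  have := grad_lipschitz (s *: u + x) x; rewrite addrK enormZ gtr0_norm // => lip.
  have := cauchy_schwarz (grad (s *: u + x) - grad x) u; rewrite dotvBl -/c.
  move=> /le_trans /(_ (ler_wpM2r (enorm_ge0 u) lip)).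
  have -> : L * (s * enorm u) * enorm u = q * (2 * s) by rewrite /q -enorm_sqr; field.
  lra.
have : phi 1 <= phi 0.
  have phi_derivable (s : R) : derivable phi s 1 by have [] := dphi s.
  apply: (@ler0_derive1_le_cc _ phi 0 1) => //.
  - by apply: derivable_within_continuous => s _; exact: phi_derivable.
  - by rewrite in_itv /= ler01 lexx.
  - by rewrite in_itv /= ler01 lexx.
rewrite /phi scale1r scale0r add0r subrK expr1n expr0n /= !mulr0 !mulr1 !subr0.
lra.
Qed.

End Smoothness.

Section Curvature.
Variables (R : realType) (n : nat) (f : 'rV[R]_n -> R) (grad : 'rV[R]_n -> 'rV[R]_n).

Lemma is_gradientN : is_gradient f grad ->
  is_gradient (fun x => - f x) (fun x => - grad x).
Proof.
move=> grad_f x; have [df dfE] := grad_f x; split; first exact: differentiableN.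
move=> v; rewrite (_ : (fun x => - f x) = - f) // (diffN df).
by rewrite -[LHS]/(- 'd f x v) dfE dotvNl.
Qed.

Lemma descent_of_ell_le (K : R) (x y : 'rV[R]_n) : ell f grad x y <= K ->
  f y - f x - dotv (grad x) (y - x) <= K / 2 * dotv (y - x) (y - x).
Proof.
rewrite /ell; have [->|xy] := eqVneq x y => ellK.
  by rewrite !subrr !dotv0r subr0 mulr0.
have uu_gt0 : 0 < dotv (y - x) (y - x) by rewrite dotvv_gt0 // subr_eq0 eq_sym.
rewrite enorm_sqr ler_pdivrMr // in ellK.
by apply: le_trans (ler_norm _) _; lra.
Qed.

Variable L : R.
Hypothesis grad_f : is_gradient f grad.
Hypothesis grad_lipschitz : forall y z, enorm (grad y - grad z) <= L * enorm (y - z).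

Lemma descent_lemma_norm (x y : 'rV[R]_n) :
  `|f y - f x - dotv (grad x) (y - x)| <= L / 2 * dotv (y - x) (y - x).
Proof.
have lipN y' z' : enorm (- grad y' - - grad z') <= L * enorm (y' - z').
  by rewrite -opprD -scaleN1r enormZ normrN1 mul1r.
have := descent_lemma (is_gradientN grad_f) lipN x y.
have := descent_lemma grad_f grad_lipschitz x y.
rewrite dotvNl ler_norml; lra.
Qed.

Lemma ell_le_lipschitz (x y : 'rV[R]_n) : x != y -> ell f grad x y <= L.
Proof.
move=> xy; have uu_gt0 : 0 < dotv (y - x) (y - x) by rewrite dotvv_gt0 // subr_eq0 eq_sym.
rewrite /ell (negbTE xy) enorm_sqr ler_pdivrMr //.
by have := descent_lemma_norm x y; lra.
Qed.

End Curvature.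

Section Recurrence.
Variable R : realFieldType.

Lemma rate_step_linear (B M m a a' : R) : 1 <= B -> B - 1 <= m -> 0 <= M ->
  a * m <= M -> a' <= a - a / B -> a' * (m + 1) <= M.
Proof.
move=> B1 Bm M0 am a'_le; have [a'0|a'0] := lerP a' 0; first by nra.
have a'B : a' * B <= a * (B - 1).
  by move: a'_le; rewrite -(ler_pM2r (lt_le_trans ltr01 B1)) mulrBl divfK; lra.
have a0 : 0 <= a by nra.
have s1 : a' * B * (m + 1) <= a * (B - 1) * (m + 1) by rewrite ler_wpM2r //; lra.
have s2 : a * ((B - 1) * (m + 1)) <= a * (B * m) by rewrite ler_wpM2l //; nra.
have s3 : B * (a * m) <= B * M by rewrite ler_wpM2l //; lra.
rewrite -(ler_pM2l (lt_le_trans ltr01 B1)); nra.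
Qed.

Lemma rate_step_quadratic (M m a a' : R) : 1 <= m -> 0 <= M ->
  a * m <= M -> a' <= a -> a ^+ 2 <= M * (a - a') -> a' * (m + 1) <= M.
Proof.
move=> m1 M0 am a'a decr; have [a'0|a'0] := lerP a' 0; first by nra.
have M_gt0 : 0 < M by nra.
have key : (m + 1) * (M * a - a ^+ 2) <= M ^+ 2.
  have -> : M ^+ 2 = (m + 1) * (M * a - a ^+ 2)
      + (a ^+ 2 + a * (M - a * m) * (m - 1) + (M - a * m) ^+ 2) by ring.
  rewrite lerDl !addr_ge0 ?sqr_ge0 // !mulr_ge0 //; lra.
rewrite -(ler_pM2l M_gt0); nra.
Qed.

Lemma rate_of_recurrence (B M : R) (a : nat -> R) : 2 <= B -> 0 <= M ->
  a 0%N * (B - 1) <= M ->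
  (forall k, a k.+1 <= a k /\
     (a k.+1 <= a k - a k / B \/ a k ^+ 2 <= M * (a k - a k.+1))) ->
  forall k, a k * (k%:R + B - 1) <= M.
Proof.
move=> B2 M0 a0 step; elim=> [|k IH]; first by rewrite add0r.
have -> : k.+1%:R + B - 1 = (k%:R + B - 1) + 1 by rewrite -natr1; ring.
have k0 : 0 <= k%:R :> R := ler0n _ _.
have [mono [lin|quad]] := step k.
- by apply: rate_step_linear lin; lra.
- by apply: rate_step_quadratic quad; lra.
Qed.

End Recurrence.

Lemma clipped_model_decrease (R : realFieldType) (K N g eta gam : R) :
  0 <= eta <= 2 -> 0 <= g -> 1 <= gam -> gam * (K * N) <= g ->
  (1 - eta / 2) * g <= gam * g - eta * K / 2 * (gam ^+ 2 * N).
Proof.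
move=> /andP [eta0 eta2] g0 gam1 gamKN.
have -> : eta * K / 2 * (gam ^+ 2 * N) = eta / 2 * gam * (gam * (K * N)) by ring.
have : eta / 2 * gam * (gam * (K * N)) <= eta / 2 * gam * g.
  by rewrite ler_wpM2l // mulr_ge0 //; lra.
have : (1 - eta / 2) * g <= (1 - eta / 2) * (gam * g) by rewrite ler_wpM2l ?ler_peMl //; lra.
lra.
Qed.

Section ACFW.
Variables (R : realType) (n : nat) (X : set 'rV[R]_n) (f : 'rV[R]_n -> R).
Variables (grad : 'rV[R]_n -> 'rV[R]_n) (L D Rc eta : R) (xstar : 'rV[R]_n).
Variables (r gamma Lc : nat -> R) (x d xbar : nat -> 'rV[R]_n) (gmax : nat -> \bar R).

Hypothesis grad_f : is_gradient f grad.
Hypothesis grad_lipschitz : forall y z, enorm (grad y - grad z) <= L * enorm (y - z).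
Hypothesis xstar_min : forall y, X y -> f xstar <= f y.
Hypothesis X_x0 : X (x 0%N).
Hypothesis Lc0_gt0 : 0 < Lc 0%N.
Hypothesis Lc0_le : Lc 0%N <= L.
Hypothesis gmax_gt0 : forall t, (0 < gmax t)%E.
Hypothesis gammaE : forall t, ((gamma t)%:E =
  mine ((dotv (grad (x t)) (d t) / (Lc t * enorm (d t) ^+ 2))%:E) (gmax t))%E.
Hypothesis xbarE : forall t, xbar t = x t - gamma t *: d t.
Hypothesis LcS : forall t, Lc t.+1 = Num.max (ell f grad (x t) (xbar t)) (r t * Lc t).
Hypothesis xS : forall t, x t.+1 = if f (xbar t) < f (x t) then xbar t else x t.
Hypothesis eta_ge1 : 1 <= eta.
Hypothesis eta_lt2 : eta < 2.
Hypothesis r_bounds : forall t, 0 < r t <= 1.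
Hypothesis d_le : forall t, enorm (d t) <= D.
Hypothesis steps_feasible : forall t g, 0 <= g -> (g%:E <= gmax t)%E -> X (x t - g *: d t).
Hypothesis Rc_ge1 : 1 <= Rc.
Hypothesis gap_le_slope : forall t, (f (x t) - f xstar) / Rc <= dotv (grad (x t)) (d t).

Local Notation gap t := (f (x t) - f xstar).
Local Notation slope t := (dotv (grad (x t)) (d t)).
Local Notation sqnorm t := (dotv (d t) (d t)).
Local Notation B := (2 * Rc / (2 - eta)).
Local Notation P := (2 * L * Rc ^+ 2 * D ^+ 2 / (2 - eta)).

Lemma eta_ge0 : 0 <= eta.
Proof. exact: le_trans ler01 eta_ge1. Qed.

Lemma Rc_gt0 : 0 < Rc.
Proof. exact: lt_le_trans ltr01 Rc_ge1. Qed.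

Lemma Lc_gt0 t : 0 < Lc t.
Proof.
elim: t => // t Lt_gt0; have /andP [r_gt0 _] := r_bounds t.
by rewrite LcS lt_max mulr_gt0 ?orbT.
Qed.

Lemma Lc_le t : Lc t <= L.
Proof.
elim: t => // t Lt_le; have /andP [r_gt0 r_le1] := r_bounds t.
rewrite LcS ge_max; apply/andP; split.
  have [->|xxbar] := eqVneq (x t) (xbar t); last exact: ell_le_lipschitz.
  by rewrite /ell eqxx; apply: le_trans Lc0_le; exact: ltW.
by rewrite -[L]mul1r ler_pM // ltW // Lc_gt0.
Qed.

Lemma gamma_le_gmax t : ((gamma t)%:E <= gmax t)%E.
Proof. by rewrite gammaE ge_min lexx orbT. Qed.

Lemma gamma_ge0 t : 0 <= slope t -> 0 <= gamma t.
Proof.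
move=> slope0; rewrite -lee_fin gammaE le_min (ltW (gmax_gt0 t)) andbT lee_fin.
by rewrite divr_ge0 // mulr_ge0 ?sqr_ge0 // ltW // Lc_gt0.
Qed.

Lemma iterate_feasible t : X (x t).
Proof.
elim: t => // t Xt; rewrite xS; case: ifP => // _.
have slope0 : 0 <= slope t.
  apply: le_trans (gap_le_slope t); rewrite divr_ge0 ?subr_ge0 ?xstar_min //.
  exact: ltW Rc_gt0.
by rewrite xbarE; apply: steps_feasible; [exact: gamma_ge0 | exact: gamma_le_gmax].
Qed.

Lemma gap_ge0 t : 0 <= gap t.
Proof. by rewrite subr_ge0; apply: xstar_min; exact: iterate_feasible. Qed.

Lemma slope_ge0 t : 0 <= slope t.
Proof. by apply: le_trans (gap_le_slope t); rewrite divr_ge0 ?gap_ge0 // ltW // Rc_gt0. Qed.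

Lemma gapS_le_bar t : gap t.+1 <= f (xbar t) - f xstar.
Proof. by rewrite xS; case: ltP => // xbar_ge; rewrite lerD2r. Qed.

Lemma gap_nonincreasing : nonincreasing_seq (fun t => gap t).
Proof.
by apply/nonincreasing_seqP => t; rewrite xS; case: ifP => // /ltW xbar_le; rewrite lerD2r.
Qed.

Lemma gapS_le_model s : Lc s.+1 <= eta * Lc s ->
  gap s.+1 <= gap s - gamma s * slope s + eta * Lc s / 2 * (gamma s ^+ 2 * sqnorm s).
Proof.
move=> Lc_le_eta; apply: le_trans (gapS_le_bar s) _.
have step : xbar s - x s = (- gamma s) *: d s by rewrite xbarE addrAC subrr add0r scaleNr.
have : ell f grad (x s) (xbar s) <= Lc s.+1 by rewrite LcS le_max lexx.
move=> /descent_of_ell_le; rewrite step dotvZr !dotvZl dotvZr.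
rewrite [- gamma s * (_ * _)]mulrA mulrNN -expr2 => descent.
have : Lc s.+1 / 2 * (gamma s ^+ 2 * sqnorm s) <= eta * Lc s / 2 * (gamma s ^+ 2 * sqnorm s).
  by apply: ler_wpM2r; [rewrite mulr_ge0 ?sqr_ge0 ?dotvv_ge0 | lra].
lra.
Qed.

Lemma sqnorm_le s : sqnorm s <= D ^+ 2.
Proof. by rewrite -enorm_sqr !expr2 ler_pM ?enorm_ge0 ?d_le. Qed.

Lemma P_ge0 : 0 <= P.
Proof.
have L_ge0 : 0 <= L := le_trans (ltW (Lc_gt0 0)) Lc0_le.
by rewrite divr_ge0 ?subr_ge0 ?(ltW eta_lt2) // mulr_ge0 ?sqr_ge0 // mulr_ge0 ?sqr_ge0 // mulr_ge0.
Qed.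

Lemma gap_decrease_full s : Lc s.+1 <= eta * Lc s -> 0 < sqnorm s ->
  gamma s = slope s / (Lc s * sqnorm s) -> gap s ^+ 2 <= P * (gap s - gap s.+1).
Proof.
move=> Lc_le_eta N_gt0 gamma_full.
set g := slope s; set N := sqnorm s; set K := Lc s; set q := g ^+ 2 / (K * N).
have KN_gt0 : 0 < K * N by rewrite mulr_gt0 // Lc_gt0.
have decrease : (1 - eta / 2) * q <= gap s - gap s.+1.
  have := gapS_le_model Lc_le_eta; rewrite gamma_full -/g -/N -/K.
  have : g / (K * N) * g - eta * K / 2 * ((g / (K * N)) ^+ 2 * N) = (1 - eta / 2) * q.
    by rewrite /q; field; rewrite gt_eqF //= gt_eqF // Lc_gt0.
  lra.
have g_sq : g ^+ 2 <= L * D ^+ 2 * q.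
  have -> : g ^+ 2 = K * N * q by rewrite /q mulrC divfK // gt_eqF.
  apply: ler_wpM2r; first by rewrite divr_ge0 ?sqr_ge0 ?ltW.
  by rewrite ler_pM ?sqnorm_le ?Lc_le ?dotvv_ge0 // ltW // Lc_gt0.
have gap_sq : gap s ^+ 2 <= Rc ^+ 2 * g ^+ 2.
  rewrite -exprMn ler_pXn2r ?nnegrE ?gap_ge0 ?mulr_ge0 ?slope_ge0 ?(ltW Rc_gt0) //.
  by rewrite mulrC -ler_pdivrMr ?Rc_gt0 ?gap_le_slope.
have P_eta : P * (1 - eta / 2) = Rc ^+ 2 * (L * D ^+ 2) by field; rewrite lt0r_neq0 // subr_gt0.
apply: (le_trans gap_sq); apply: le_trans (ler_wpM2l P_ge0 decrease).
rewrite [P * _]mulrA P_eta -mulrA ler_wpM2l ?sqr_ge0 //.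
Qed.

Lemma gap_decrease_clipped s : Lc s.+1 <= eta * Lc s -> 1 <= gamma s ->
  gamma s * (Lc s * sqnorm s) <= slope s -> gap s.+1 <= gap s - gap s / B.
Proof.
move=> Lc_le_eta gamma1 gamma_clip.
have eta_le2 : 0 <= eta <= 2 by rewrite eta_ge0 ltW.
have := clipped_model_decrease eta_le2 (slope_ge0 s) gamma1 gamma_clip.
have := gapS_le_model Lc_le_eta.
have : (1 - eta / 2) * (gap s / Rc) <= (1 - eta / 2) * slope s.
  by apply: ler_wpM2l; [move: eta_lt2; lra | exact: gap_le_slope].
have -> : gap s / B = (1 - eta / 2) * (gap s / Rc).
  by field; rewrite lt0r_neq0 ?Rc_gt0 //= lt0r_neq0 // subr_gt0.
lra.
Qed.

Lemma gap_decrease s :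
  ((1 <= gmax s)%E \/ ((gamma s)%:E < gmax s)%E) -> Lc s.+1 <= eta * Lc s ->
  gap s.+1 <= gap s - gap s / B \/ gap s ^+ 2 <= P * (gap s - gap s.+1).
Proof.
move=> good Lc_le_eta; have [N_le0|N_gt0] := lerP (sqnorm s) 0.
  have slope_le0 : slope s <= 0.
    have := cauchy_schwarz (grad (x s)) (d s).
    by rewrite /enorm (@le_anti _ _ (sqnorm s) 0) ?N_le0 ?dotvv_ge0 // sqrtr0 mulr0.
  have gap0 : gap s = 0.
    apply/le_anti; rewrite gap_ge0 andbT.
    rewrite -(@ler_pM2r _ Rc^-1) ?invr_gt0 ?Rc_gt0 // mul0r.
    exact: le_trans (gap_le_slope s) slope_le0.
  by left; rewrite gap0 mul0r subr0; move: (gap_nonincreasing (leqnSn s)); rewrite gap0.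
have := gammaE s; rewrite enorm_sqr.
have [full|clipped] := leP ((slope s / (Lc s * sqnorm s))%:E) (gmax s).
  by move=> [gamma_full]; right; exact: gap_decrease_full.
move=> gammaE_max; left; apply: gap_decrease_clipped => //.
  by case: good; rewrite -gammaE_max ?lee_fin // ltxx.
by apply: ltW; rewrite -ltr_pdivlMr ?mulr_gt0 ?Lc_gt0 // -lte_fin gammaE_max.
Qed.

Lemma B_ge2 : 2 <= B.
Proof. by rewrite ler_pdivlMr ?subr_gt0 //; move: Rc_ge1 eta_ge1; lra. Qed.

Lemma gap_rate (h : nat -> nat) : (forall k, (h k < h k.+1)%N) ->
  (forall k, ((1 <= gmax (h k))%E \/ ((gamma (h k))%:E < gmax (h k))%E) /\
     Lc (h k).+1 <= eta * Lc (h k)) ->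
  forall k, gap (h k) <= Num.max ((B - 1) * gap 0%N) P / (k%:R + B - 1).
Proof.
move=> h_incr h_good k; have B2 := B_ge2.
have k0 : 0 <= k%:R :> R := ler0n _ _.
rewrite ler_pdivlMr; last lra.
apply: (rate_of_recurrence (a := fun k => gap (h k))) => //.
- by rewrite le_max mulr_ge0 ?gap_ge0 //; lra.
- rewrite le_max mulrC ler_wpM2l //; first lra.
  exact: gap_nonincreasing (leq0n _).
move=> j; have [good Lc_le_eta] := h_good j.
have later : gap (h j.+1) <= gap (h j).+1 := gap_nonincreasing (h_incr j).
have next_le := gap_nonincreasing (leqnSn (h j)).
split; first exact: le_trans later next_le.
case: (gap_decrease good Lc_le_eta) => [lin|quad]; [left; lra | right].
apply: (le_trans quad); apply: ler_pM; rewrite ?P_ge0 ?le_max ?lexx ?orbT //; lra.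
Qed.

End ACFW.

Theorem theorem2 (R : realType) (n : nat)
  (A X : set 'rV[R]_n) (f : 'rV[R]_n -> R) (grad : 'rV[R]_n -> 'rV[R]_n)
  (L : R) (xstar : 'rV[R]_n)
  (* algorithm data *)
  (r : nat -> R) (xm1 : 'rV[R]_n) (x v d xbar : nat -> 'rV[R]_n)
  (gmax : nat -> \bar R) (gamma Lc : nat -> R)
  (eta Rc : R) (h : nat -> nat) :
  (* problem assumptions *)
  compact A ->
  X = convhull A \/ X = linspan A ->
  convex_fun f ->
  is_gradient f grad ->
  (forall y z, enorm (grad y - grad z) <= L * enorm (y - z)) ->
  X xstar -> (forall y, X y -> f xstar <= f y) ->
  (* AC-FW initialization *)
  A xm1 ->
  A (x 0%N) -> (forall u, A u -> dotv (grad xm1) (x 0%N) <= dotv (grad xm1) u) ->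
  Lc 0%N = ell f grad xm1 (x 0%N) ->
  0 < Lc 0%N ->
  (* AC-FW iterations *)
  (forall t, A (v t) /\ forall u, A u -> dotv (grad (x t)) (v t) <= dotv (grad (x t)) u) ->
  (forall t, (0 < gmax t)%E) ->
  (forall t, ((gamma t)%:E =
      mine ((dotv (grad (x t)) (d t) / (Lc t * enorm (d t) ^+ 2))%:E) (gmax t))%E) ->
  (forall t, xbar t = x t - gamma t *: d t) ->
  (forall t, Lc t.+1 = Num.max (ell f grad (x t) (xbar t)) (r t * Lc t)) ->
  (forall t, x t.+1 = if f (xbar t) < f (x t) then xbar t else x t) ->
  (* eta in (1,2) *)
  1 < eta < 2 ->
  (* Condition (D) *)
  (forall t, 0 < r t <= 1) ->
  (exists p : R, 0 < p <= 1 /\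
     (fun N : nat => \prod_(i < N) r i) @ \oo --> p) ->
  (* Condition (S) *)
  (forall t, enorm (d t) <= diam A /\
     forall g : R, 0 <= g -> (g%:E <= gmax t)%E -> X (x t - g *: d t)) ->
  infinite_set [set t : nat | (1 <= gmax t)%E \/ ((gamma t)%:E < gmax t)%E] ->
  1 <= Rc ->
  (forall t, dotv (grad (x t)) (d t) >= (f (x t) - f xstar) / Rc) ->
  (* h enumerates G cap I_eta in increasing order *)
  (forall t, (h t < h t.+1)%N) ->
  (forall s : nat,
     (((1 <= gmax s)%E \/ ((gamma s)%:E < gmax s)%E) /\ Lc s.+1 <= eta * Lc s)
     <-> exists t, h t = s) ->
  forall t : nat,
    f (x (h t)) - f xstar <=
      Num.max ((2 * Rc / (2 - eta) - 1) * (f (x 0%N) - f xstar))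
              (2 * L * Rc ^+ 2 * diam A ^+ 2 / (2 - eta))
      / (t%:R + 2 * Rc / (2 - eta) - 1).
Proof.
move=> _ hX _ grad_f grad_lipschitz _ xstar_min _ Ax0 _ Lc0E Lc0_gt0 _ gmax_gt0 gammaE
  xbarE LcS xS /andP [eta_gt1 eta_lt2] r_bounds _ S _ Rc_ge1 gap_le_slope h_incr h_good.
have X_x0 : X (x 0%N) by case: hX => ->; [exact: subset_convhull | exact: subset_linspan].
have Lc0_le : Lc 0%N <= L.
  rewrite Lc0E ell_le_lipschitz //; apply: contraTneq Lc0_gt0 => xm1E.
  by rewrite Lc0E /ell xm1E eqxx ltxx.
apply: (gap_rate grad_f grad_lipschitz xstar_min X_x0 Lc0_gt0 Lc0_le gmax_gt0 gammaE xbarE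
  LcS xS (ltW eta_gt1) eta_lt2 r_bounds (fun t => (S t).1) (fun t => (S t).2) Rc_ge1
  gap_le_slope h_incr) => k.
by apply/h_good; exists k.
Qed.
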